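(* Let $A=(a_{ij}), B=(b_{ij})\in\mathbb{R}^{n\times n}_+$ be extended Leslie matrices, i.e. entrywise nonnegative matrices whose only possibly nonzero entries are those in the first row, the subdiagonal entries $(i,i-1)$ for $2\le i\le n$, and the $(n,n)$ entry. Define $m_{i,i-1}=\max\{a_{i,i-1},b_{i,i-1}\}$ for $2\le i\le n$ and $m_{nn}=\max\{a_{nn},b_{nn}\}$. Let $S_1$ be the matrix whose first row equals the first row of $A$, whose $(i,i-1)$ entries are $m_{i,i-1}$ for $2\le i\le n$, whose $(n,n)$ entry is $m_{nn}$, and all other entries zero; let $S_2$ be defined identically but with first row equal to the first row of $B$. Assume $S_1$ and $S_2$ are both Schur-stable. Let $\mathcal{L}_{A,B}$ be the set of entrywise nonnegative matrices $D\in\mathbb{R}^{n\times n}$ whose only possibly nonzero entries are the subdiagonal entries $d_{i,i-1}$ ($2\le i\le n$) and the entry $d_{nn}$, and such that $A-D\ge 0$ and $B-D\ge 0$ entrywise. Then for every $D\in\mathcal{L}_{A,B}$ the matrix $$M=\begin{pmatrix} A-D & D\\ D & B-D\end{pmatrix}$$ is Schur-stable.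
   Context: A real square matrix is Schur-stable if its spectral radius is strictly less than $1$. $\mathbb{R}^{n\times n}_+$ denotes the set of entrywise nonnegative $n\times n$ real matrices; inequalities between matrices are entrywise. *)

From HB Require Import structures.
From mathcomp Require Import all_boot all_order all_algebra.
From mathcomp Require Import complex.
From mathcomp Require Import reals.
Set Implicit Arguments. Unset Strict Implicit. Unset Printing Implicit Defensive.
Import Order.TTheory GRing.Theory Num.Theory.
Local Open Scope ring_scope.
Local Open Scope complex_scope.

(* Indices are 0-based: paper row i (1..n) is ordinal i-1. *)

Definition nonneg_mx (R : realType) m n (A : 'M[R]_(m, n)) : Prop :=
  forall i j, 0 <= A i j.

Definition ext_leslie_pos n (i j : 'I_n) : bool :=
  [|| (i == 0 :> nat), (i == j.+1 :> nat) | ((i == n.-1 :> nat) && (j == n.-1 :> nat))].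

Definition ext_leslie (R : realType) n (A : 'M[R]_n) : Prop :=
  nonneg_mx A /\ forall i j, ~~ ext_leslie_pos i j -> A i j = 0.

Definition subdiag_nn_pos n (i j : 'I_n) : bool :=
  (i == j.+1 :> nat) || ((i == n.-1 :> nat) && (j == n.-1 :> nat)).

Definition S_mx (R : realType) n (F A B : 'M[R]_n) : 'M[R]_n :=
  \matrix_(i, j)
    if (i == n.-1 :> nat) && (j == n.-1 :> nat) then Num.max (A i j) (B i j)
    else if (i == 0 :> nat) then F i j
    else if (i == j.+1 :> nat) then Num.max (A i j) (B i j)
    else 0.

Definition L_AB (R : realType) n (A B D : 'M[R]_n) : Prop :=
  nonneg_mx D /\ (forall i j, ~~ subdiag_nn_pos i j -> D i j = 0) /\
  nonneg_mx (A - D) /\ nonneg_mx (B - D).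

Definition schur_stable (R : realType) n (A : 'M[R]_n) : Prop :=
  forall lam : R[i], eigenvalue (map_mx (fun x : R => x%:C) A) lam -> `|lam| < 1.

(* S_1 and S_2 dominate A and B entrywise, and they are Leslie matrices with
   the same subdiagonal s and corner q, differing only in their first rows f.
   For such a nonnegative Leslie matrix L_f, Schur stability forces q < 1 and
   euler_lotka f 1 < 1: otherwise the polynomial obtained from the
   Euler-Lotka equation has a real root lam >= 1 by the intermediate value
   theorem, and the Euler-Lotka vector is an eigenvector for lam (if
   f_m l_m = 0, q itself is an eigenvalue).  Given these two inequalities
   for both first rows, a small perturbation z of the Euler-Lotka vector at 1
   satisfies L_f z < z entrywise for both of them at once.
   Then M (z; z) = (A z; B z) <= (S_1 z; S_2 z) < (z; z), and a nonnegative
   matrix with a nonnegative strictly subinvariant vector has spectral radius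
   less than 1. *)
From HB Require Import structures.
From mathcomp Require Import all_boot all_order all_algebra.
From mathcomp Require Import complex.
From mathcomp Require Import reals.
From mathcomp Require Import zify ring lra.
Set Implicit Arguments. Unset Strict Implicit. Unset Printing Implicit Defensive.
Import Order.TTheory GRing.Theory Num.Theory.
Local Open Scope ring_scope.
Local Open Scope complex_scope.

Lemma eigenvalue_trmx (F : fieldType) n (A : 'M[F]_n) a :
  eigenvalue A^T a = eigenvalue A a.
Proof.
rewrite !eigenvalue_root_char /char_poly -det_tr; congr (root (\det _) a).
by apply/matrixP => i j; rewrite !mxE eq_sym.
Qed.

Lemma eigenvalue_col (F : fieldType) n (A : 'M[F]_n) a (x : 'cV_n) :
  x != 0 -> A *m x = a *: x -> eigenvalue A a.
Proof.
move=> x_neq0 Ax; rewrite -eigenvalue_trmx; apply/eigenvalueP; exists x^T.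
  by rewrite -trmx_mul Ax linearZ.
by rewrite trmx_eq0.
Qed.

Lemma schur_stable_eigenvalue_lt1 (R : realType) n (S : 'M[R]_n) (a : R) :
  schur_stable S -> eigenvalue S a -> 0 <= a -> a < 1.
Proof.
move=> S_st Sa a_ge0; rewrite -ltcR -(@ger0_norm _ a%:C) ?lecR //.
by apply: S_st; rewrite (eigenvalue_map (real_complex R)).
Qed.

Lemma schur_stable_subinvariant (R : realType) n (M : 'M[R]_n) (x : 'cV[R]_n) :
  nonneg_mx M -> nonneg_mx x -> (forall i, (M *m x) i 0 < x i 0) ->
  schur_stable M.
Proof.
move=> M_ge0 x_ge0 Mx_lt lam /eigenvalueP [v vM v_neq0].
(* Weighting a left eigenvector by x: |lam| (|v|.x) <= |v|.(M x) < |v|.x. *)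
have C_ge0 (y : R) : 0 <= y -> 0 <= y%:C by rewrite lecR.
pose T := \sum_j `|v 0 j| * (x j 0)%:C.
pose U := \sum_i `|v 0 i| * ((M *m x) i 0)%:C.
have lamT_le : `|lam| * T <= U.
  have -> : U = \sum_j (\sum_i `|v 0 i| * (M i j)%:C) * (x j 0)%:C.
    rewrite /U; under eq_bigr => i _ do rewrite mxE rmorph_sum mulr_sumr.
    rewrite exchange_big; apply: eq_bigr => j _; rewrite mulr_suml.
    by apply: eq_bigr => i _; rewrite rmorphM mulrA.
  rewrite mulr_sumr; apply: ler_sum => j _.
  rewrite mulrA ler_wpM2r ?C_ge0 ?(x_ge0 j 0) //.
  move/rowP: vM => /(_ j); rewrite !mxE => vMj; rewrite -normrM -vMj.
  apply: le_trans (ler_norm_sum _ _ _) _; apply: ler_sum => i _.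
  by rewrite !mxE normrM (ger0_norm (C_ge0 _ (M_ge0 i j))).
have UT_lt : U < T.
  have [i0 vi0_neq0] : exists i0, v 0 i0 != 0.
    apply/existsP; apply: contraR v_neq0; rewrite negb_exists => /forallP v0.
    by apply/eqP/rowP => i; rewrite mxE; apply/eqP; rewrite -[_ == _]negbK v0.
  rewrite -subr_gt0 /T /U -sumrB (bigD1 i0) //= -mulrBr -rmorphB /=.
  apply: ltr_pwDl; first by rewrite mulr_gt0 ?normr_gt0 ?ltcR ?subr_gt0.
  apply: sumr_ge0 => i _; rewrite -mulrBr -rmorphB mulr_ge0 //.
  by rewrite C_ge0 // subr_ge0 ltW.
have T_gt0 : 0 < T.
  apply: le_lt_trans UT_lt; apply: le_trans lamT_le; rewrite mulr_ge0 // /T.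
  by apply: sumr_ge0 => j _; apply: mulr_ge0 => //; apply: C_ge0; apply: x_ge0.
by rewrite -(ltr_pM2r T_gt0) mul1r (le_lt_trans lamT_le).
Qed.

Lemma sum_ord_delta (R : pzSemiRingType) n k (a : R) (Y : nat -> R) :
  \sum_(j < n) (if j == k :> nat then a else 0) * Y j =
  if (k < n)%N then a * Y k else 0.
Proof.
case: ltnP => [k_lt | k_ge].
  rewrite (bigD1 (Ordinal k_lt)) //= eqxx big1 ?addr0 // => j.
  by rewrite -val_eqE /= => /negbTE ->; rewrite mul0r.
rewrite big1 // => j _; rewrite ifF ?mul0r //.
by apply: contraTF k_ge => /eqP <-; rewrite -ltnNge.
Qed.

Lemma affine_lt_small (R : realFieldType) (a b c : R) : a < c -> 0 <= b ->
  exists2 e, 0 < e & forall d, d <= e -> a + d * b < c.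
Proof.
move=> ac b_ge0; have b1_gt0 : 0 < b + 1 by rewrite ltr_wpDl.
exists ((c - a) / (b + 1)) => [|d de]; first by rewrite divr_gt0 ?subr_gt0.
have e_small : (c - a) / (b + 1) * b < c - a.
  by rewrite mulrAC ltr_pdivrMr // ltr_pM2l ?subr_gt0 // ltrDl.
have : d * b <= (c - a) / (b + 1) * b by rewrite ler_wpM2r.
lra.
Qed.

Section LeslieMatrix.
Variables (R : realType) (m : nat) (s : nat -> R) (q : R).
Hypothesis m_gt0 : (0 < m)%N.

Definition leslie_mx (f : nat -> R) : 'M[R]_m.+1 := \matrix_(i, j)
  if i == 0 :> nat then f j else if i == j.+1 :> nat then s i
  else if (i == m :> nat) && (j == m :> nat) then q else 0.

Lemma leslie_mulmx_row0 f (Y : nat -> R) :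
  (leslie_mx f *m \col_i Y i) 0 0 = \sum_(j < m.+1) f j * Y j.
Proof. by rewrite mxE; apply: eq_bigr => j _; rewrite !mxE eqxx. Qed.

Lemma leslie_mulmx_row f (Y : nat -> R) (i : 'I_m.+1) : i != 0 :> nat ->
  (leslie_mx f *m \col_i Y i) i 0 =
  if (i < m)%N then s i * Y i.-1 else s m * Y m.-1 + q * Y m.
Proof.
move=> i_neq0; have i_le := ltn_ord i.
have entry (j : 'I_m.+1) : leslie_mx f i j * (\col_i Y i) j 0 =
    (if j == i.-1 :> nat then s i else 0) * Y j +
    (if j == m :> nat then if i == m :> nat then q else 0 else 0) * Y j.
  rewrite !mxE (negbTE i_neq0).
  have -> : (i == j.+1 :> nat) = (j == i.-1 :> nat) by apply/eqP/eqP; lia.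
  case: (boolP (j == i.-1 :> nat)) => [/eqP ji | _].
    by rewrite ifF ?mul0r ?addr0 //; apply/eqP; lia.
  by case: (j == m :> nat); case: (i == m :> nat); rewrite /= ?mul0r ?add0r.
rewrite mxE (eq_bigr _ (fun j _ => entry j)) big_split /= !sum_ord_delta.
rewrite ifT ?ltnSn; last by lia.
case: ltnP => [i_lt | i_ge]; first by rewrite ifF ?mul0r ?addr0 //; apply/eqP; lia.
have -> : nat_of_ord i = m by lia.
by rewrite eqxx.
Qed.

Lemma leslie_mulmx_col f (V : nat -> R) (j : 'I_m.+1) :
  ((\row_i V i) *m leslie_mx f) 0 j =
  V 0%N * f j + (if (j < m)%N then V j.+1 * s j.+1 else V m * q).
Proof.
have j_le := ltn_ord j.
have entry (i : 'I_m.+1) : (\row_i V i) 0 i * leslie_mx f i j =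
    (if i == 0%N :> nat then f j else 0) * V i +
    (if i == j.+1 :> nat then s j.+1 else 0) * V i +
    (if i == m :> nat then if j == m :> nat then q else 0 else 0) * V i.
  rewrite !mxE mulrC; case: eqP => [-> | _].
    by rewrite ifF ?ifF ?mul0r ?addr0 //; apply/eqP; lia.
  case: eqP => [ij | _]; last by rewrite !mul0r !add0r; case: eqP; rewrite ?mul0r.
  have -> : (j == m :> nat) = false by apply/eqP; have := ltn_ord i; lia.
  by rewrite ij if_same !mul0r add0r addr0.
rewrite mxE (eq_bigr _ (fun i _ => entry i)) !big_split /= !sum_ord_delta.
rewrite ltnS leqnn /= ltnS mulrC; case: ltnP => [j_lt | j_ge].
  by rewrite ifF ?mul0r ?addr0 1?[s _ * _]mulrC //; apply/eqP; lia.
have -> : nat_of_ord j = m by lia.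
by rewrite eqxx addr0 [q * _]mulrC.
Qed.

Definition surv k := \prod_(1 <= i < k.+1) s i.

Lemma surv0 : surv 0 = 1.
Proof. by rewrite /surv big_geq. Qed.

Lemma survS k : surv k.+1 = surv k * s k.+1.
Proof. by rewrite /surv big_nat_recr. Qed.

Hypothesis s_ge0 : forall i, 0 <= s i.
Hypothesis q_ge0 : 0 <= q.

Lemma surv_ge0 k : 0 <= surv k.
Proof. by apply: prodr_ge0 => i _. Qed.

(* Entries l_j / lam^j, the survival products discounted by the growth rate;
   the last entry also collects the stationary mass of the self-loop q. *)
Definition lotka_vec (lam : R) (j : nat) :=
  if j == m then surv m / (lam ^+ m.-1 * (lam - q)) else surv j / lam ^+ j.

Definition euler_lotka (f : nat -> R) lam := \sum_(j < m.+1) f j * lotka_vec lam j.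

(* The Euler-Lotka equation [euler_lotka f lam = lam] cleared of
   denominators (see [lotka_polyE]); it is the characteristic polynomial of
   [leslie_mx f]. *)
Definition lotka_poly (f : nat -> R) : {poly R} :=
  'X^m * ('X - q%:P)
  - \sum_(j < m) (f j * surv j) *: ('X^(m.-1 - j) * ('X - q%:P))
  - (f m * surv m)%:P.

Lemma lotka_polyE f lam : lam != 0 -> lam != q ->
  (lotka_poly f).[lam] = lam ^+ m.-1 * (lam - q) * (lam - euler_lotka f lam).
Proof.
move=> lam_neq0 lam_neqq; have lamq_neq0 : lam - q != 0 by rewrite subr_eq0.
rewrite /lotka_poly !hornerE horner_sum /euler_lotka big_ord_recr /= /lotka_vec eqxx.
set c := lam ^+ m.-1 * (lam - q).
have c_neq0 : c != 0 by rewrite mulf_neq0 ?expf_neq0.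
rewrite [c * (_ - _)]mulrBr [c * (_ + _)]mulrDr mulr_sumr opprD addrA; congr (_ - _ - _).
- by rewrite /c -{1}(prednK m_gt0) exprS; ring.
- apply: eq_bigr => j _; rewrite ifF; last by apply/negbTE; rewrite neq_ltn ltn_ord.
  rewrite hornerZ hornerM hornerXn hornerXsubC.
  have j_le : (j <= m.-1)%N by have := ltn_ord j; lia.
  by rewrite /c -{2}(subnK j_le) exprD; field; rewrite expf_neq0.
- by rewrite mulrCA [c * _]mulrCA mulfV ?mulr1.
Qed.

Lemma leslie_lotka_vec f lam : lam != 0 -> lam != q -> euler_lotka f lam = lam ->
  leslie_mx f *m \col_i lotka_vec lam i = lam *: \col_i lotka_vec lam i.
Proof.
move=> lam_neq0 lam_neqq char_eq; have lamq_neq0 : lam - q != 0 by rewrite subr_eq0.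
apply/matrixP => i j; rewrite (ord1 j) [RHS]mxE mxE.
have [i0 | i_neq0] := eqVneq (i : nat) 0%N.
  rewrite (_ : i = 0); last exact: val_inj.
  rewrite leslie_mulmx_row0 -/(euler_lotka f lam) char_eq /lotka_vec /=.
  by rewrite ifF ?surv0 ?divr1 ?mulr1 //; lia.
have i_le := ltn_ord i.
rewrite leslie_mulmx_row // /lotka_vec.
have -> : (i.-1 == m) = false by apply/eqP; lia.
case: ltnP => [i_lt | i_ge].
  have -> : (i == m :> nat) = false by apply/eqP; lia.
  have -> : nat_of_ord i = i.-1.+1 by lia.
  by rewrite survS exprS; field; rewrite lam_neq0 expf_neq0.
have -> : nat_of_ord i = m by lia.
have -> : (m.-1 == m) = false by apply/eqP; lia.
rewrite eqxx.
have -> : surv m = surv m.-1 * s m by rewrite -[in LHS](prednK m_gt0) survS prednK.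
by field; rewrite lamq_neq0 expf_neq0.
Qed.

Lemma lotka_vec_neq0 lam : \col_(i < m.+1) lotka_vec lam i != 0.
Proof.
apply/negP => /eqP /matrixP /(_ 0 0); rewrite !mxE /lotka_vec /= ifF; last by lia.
by rewrite surv0 expr0 divr1 => /eqP; rewrite oner_eq0.
Qed.

Lemma euler_lotka_le_sum f lam : (forall j, 0 <= f j) -> 1 <= lam -> q + 1 <= lam ->
  euler_lotka f lam <= \sum_(j < m.+1) f j * surv j.
Proof.
move=> f_ge0 lam_ge1 lam_geq; apply: ler_sum => j _; rewrite ler_wpM2l //.
have lam_gt0 : 0 < lam by apply: lt_le_trans lam_ge1.
rewrite /lotka_vec; case: eqP => [-> | _].
  have den_ge1 : 1 <= lam ^+ m.-1 * (lam - q).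
    by rewrite mulr_ege1 ?exprn_ege1 // lerBrDl.
  by rewrite ler_pdivrMr ?(lt_le_trans ltr01 den_ge1) // ler_peMr ?surv_ge0.
by rewrite ler_pdivrMr ?exprn_gt0 // ler_peMr ?surv_ge0 ?exprn_ege1.
Qed.

Lemma lotka_poly_root_ge f a : (forall j, 0 <= f j) -> 0 <= a ->
  (lotka_poly f).[a] <= 0 -> exists2 x, a <= x & root (lotka_poly f) x.
Proof.
move=> f_ge0 a_ge0 Pa_le0.
set K := \sum_(j < m.+1) f j * surv j.
have K_ge0 : 0 <= K by apply: sumr_ge0 => j _; rewrite mulr_ge0 ?surv_ge0.
pose b := a + 1 + q + K.
have b_ge1 : 1 <= b by move: q_ge0; rewrite /b; lra.
have b_geq : q + 1 <= b by rewrite /b; lra.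
have Pb_ge0 : 0 <= (lotka_poly f).[b].
  rewrite lotka_polyE; last 2 first.
  - by rewrite gt_eqF // (lt_le_trans ltr01 b_ge1).
  - by rewrite gt_eqF // (lt_le_trans _ b_geq) // ltrDl.
  rewrite !mulr_ge0 ?exprn_ge0 ?subr_ge0 ?(le_trans ler01 b_ge1) //.
    by apply: le_trans b_geq; rewrite lerDl.
  apply: le_trans (euler_lotka_le_sum f_ge0 b_ge1 b_geq) _.
  by move: q_ge0; rewrite -/K /b; lra.
have ab : a <= b by move: q_ge0; rewrite /b; lra.
have [x /andP [ax _] Px] := poly_ivt ab (introT andP (conj Pa_le0 Pb_ge0)).
by exists x.
Qed.

Lemma stable_leslie_lotka_root f x : schur_stable (leslie_mx f) ->
  1 <= x -> x != q -> ~~ root (lotka_poly f) x.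
Proof.
move=> L_st x_ge1 x_neqq; apply/rootP => Px.
have x_neq0 : x != 0 by rewrite gt_eqF // (lt_le_trans ltr01 x_ge1).
have char_eq : euler_lotka f x = x.
  move/eqP: Px; rewrite lotka_polyE // !mulf_eq0 expf_eq0 (negbTE x_neq0) andbF.
  by rewrite !subr_eq0 (negbTE x_neqq) => /eqP.
have := schur_stable_eigenvalue_lt1 L_st
  (eigenvalue_col (lotka_vec_neq0 x) (leslie_lotka_vec x_neq0 x_neqq char_eq)).
by rewrite ltNge x_ge1 => /(_ (le_trans ler01 x_ge1)).
Qed.

Lemma lotka_poly_corner f : (lotka_poly f).[q] = - (f m * surv m).
Proof.
rewrite /lotka_poly !hornerE horner_sum subrr mulr0 big1 => [|j _].
  by rewrite subrr sub0r.
by rewrite hornerZ hornerM hornerXsubC subrr !mulr0.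
Qed.

Lemma leslie_eigenvalue_corner_col f : f m = 0 -> eigenvalue (leslie_mx f) q.
Proof.
move=> fm0; pose Y k : R := if k == m then 1 else 0.
apply: (@eigenvalue_col _ _ _ _ (\col_i Y i)).
  apply/negP => /eqP /matrixP /(_ ord_max 0); rewrite !mxE /Y /= eqxx.
  by move/eqP; rewrite oner_eq0.
apply/matrixP => i j; rewrite (ord1 j) [RHS]mxE [(\col_i Y i) i 0]mxE.
have [i0 | i_neq0] := eqVneq (i : nat) 0%N.
  rewrite (_ : i = 0); last exact: val_inj.
  rewrite leslie_mulmx_row0; under eq_bigr => k _ do rewrite mulrC.
  by rewrite sum_ord_delta ltnSn mul1r fm0 /Y /= ifF ?mulr0 //; apply/eqP; lia.
have i_le := ltn_ord i.
rewrite leslie_mulmx_row // /Y; case: ltnP => [i_lt | i_ge].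
  by rewrite !ifF ?mulr0 //; apply/eqP; lia.
have -> : nat_of_ord i = m by lia.
by rewrite eqxx ifF ?mulr0 ?add0r //; apply/eqP; lia.
Qed.

Lemma leslie_eigenvalue_corner_row f : surv m = 0 -> q != 0 ->
  eigenvalue (leslie_mx f) q.
Proof.
move=> sm0 q_neq0.
pose V k := if k == 0%N then 0 else (\prod_(k.+1 <= i < m.+1) s i) * q ^+ k.
apply/eigenvalueP; exists (\row_i V i).
  apply/matrixP => i j; rewrite (ord1 i) [RHS]mxE [(\row_i V i) 0 j]mxE.
  rewrite leslie_mulmx_col /V eqxx mul0r add0r /=; have j_le := ltn_ord j.
  case: ltnP => [j_lt | j_ge].
    have [j0 | j_neq0] := eqVneq (j : nat) 0%N.
      move: sm0; rewrite /surv big_ltn // => sm0.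
      by rewrite j0 expr1 ?mulr0 mulrAC [_ * s 1]mulrC sm0 mul0r.
    by rewrite (big_ltn (_ : j.+1 < m.+1)%N) ?exprS; [ring | lia].
  have -> : nat_of_ord j = m by lia.
  by rewrite ifF 1?mulrC //; apply/eqP; lia.
apply/negP => /eqP /matrixP /(_ 0 ord_max); rewrite !mxE /V /= ifF; last by lia.
by rewrite big_geq // mul1r => /eqP; rewrite expf_eq0 (negbTE q_neq0) andbF.
Qed.

Lemma stable_leslie_corner_lt1 f : (forall j, 0 <= f j) ->
  schur_stable (leslie_mx f) -> q < 1.
Proof.
move=> f_ge0 L_st; rewrite ltNge; apply/negP => q_ge1.
have q_neq0 : q != 0 by rewrite gt_eqF // (lt_le_trans ltr01 q_ge1).
have [fm0 | fm_neq0] := eqVneq (f m) 0.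
  have := schur_stable_eigenvalue_lt1 L_st (leslie_eigenvalue_corner_col fm0) q_ge0.
  by rewrite ltNge q_ge1.
have [sm0 | sm_neq0] := eqVneq (surv m) 0.
  have := schur_stable_eigenvalue_lt1 L_st (leslie_eigenvalue_corner_row f sm0 q_neq0).
  by rewrite ltNge q_ge1 => /(_ q_ge0).
have Pq_lt0 : (lotka_poly f).[q] < 0.
  by rewrite lotka_poly_corner oppr_lt0 lt0r mulf_neq0 ?mulr_ge0 ?surv_ge0.
have [x qx Px] := lotka_poly_root_ge f_ge0 q_ge0 (ltW Pq_lt0).
have x_neqq : x != q by apply: contraTneq Px => ->; rewrite /root lt_eqF.
by have := stable_leslie_lotka_root L_st (le_trans q_ge1 qx) x_neqq; rewrite Px.
Qed.

Lemma stable_leslie_euler_lotka_lt1 f : (forall j, 0 <= f j) ->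
  schur_stable (leslie_mx f) -> euler_lotka f 1 < 1.
Proof.
move=> f_ge0 L_st; have q_lt1 := stable_leslie_corner_lt1 f_ge0 L_st.
rewrite ltNge; apply/negP => EL_ge1.
have P1_le0 : (lotka_poly f).[1] <= 0.
  rewrite lotka_polyE ?oner_neq0 ?(gt_eqF q_lt1) // expr1n mul1r.
  by apply: mulr_ge0_le0; rewrite ?subr_ge0 ?subr_le0 // ltW.
have [x x_ge1 Px] := lotka_poly_root_ge f_ge0 ler01 P1_le0.
have x_neqq : x != q by rewrite gt_eqF // (lt_le_trans q_lt1 x_ge1).
by have := stable_leslie_lotka_root L_st x_ge1 x_neqq; rewrite Px.
Qed.

Hypothesis q_lt1 : q < 1.

(* [lotka_vec 1] satisfies every row of [leslie_mx f] but the first with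
   equality; [shift_seq] solves the same recursion with an extra 1 in each
   row, so moving along [shift_vec] makes all these rows strict. *)
Fixpoint shift_seq k : R := if k is k'.+1 then s k'.+1 * shift_seq k' + 1 else 0.

Definition shift_vec j := if j == m then shift_seq m / (1 - q) else shift_seq j.

Definition perturbed_vec d j := lotka_vec 1 j + d * shift_vec j.

Lemma lotka_vec1 j : lotka_vec 1 j = if j == m then surv m / (1 - q) else surv j.
Proof. by rewrite /lotka_vec !expr1n mul1r divr1. Qed.

Lemma shift_seq_ge0 k : 0 <= shift_seq k.
Proof. by elim: k => //= k IH; rewrite addr_ge0 ?mulr_ge0. Qed.

Lemma perturbed_vec_ge0 d j : 0 <= d -> 0 <= perturbed_vec d j.
Proof.
move=> d_ge0; have q1_gt0 : 0 < 1 - q by rewrite subr_gt0.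
rewrite /perturbed_vec lotka_vec1 /shift_vec.
by case: (j == m); rewrite addr_ge0 ?mulr_ge0 ?invr_ge0 ?surv_ge0 ?shift_seq_ge0
  ?(ltW q1_gt0).
Qed.

Lemma perturbed_vec0 d : perturbed_vec d 0 = 1.
Proof.
rewrite /perturbed_vec lotka_vec1 /shift_vec.
have -> : (0 == m) = false by apply/eqP; lia.
by rewrite surv0 mulr0 addr0.
Qed.

Lemma leslie_perturbed_row0 f d :
  (leslie_mx f *m \col_i perturbed_vec d i) 0 0 =
  euler_lotka f 1 + d * \sum_(j < m.+1) f j * shift_vec j.
Proof.
rewrite leslie_mulmx_row0 /euler_lotka mulr_sumr -big_split /=.
by apply: eq_bigr => j _; rewrite mulrDr mulrCA.
Qed.

Lemma leslie_perturbed_row f d (i : 'I_m.+1) : i != 0 :> nat ->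
  (leslie_mx f *m \col_i perturbed_vec d i) i 0 = perturbed_vec d i - d.
Proof.
move=> i_neq0; have i_le := ltn_ord i.
have q1_neq0 : 1 - q != 0 by rewrite subr_eq0 gt_eqF.
rewrite leslie_mulmx_row // /perturbed_vec !lotka_vec1 /shift_vec.
have -> : (i.-1 == m) = false by apply/eqP; lia.
case: ltnP => [i_lt | i_ge].
  have -> : (i == m :> nat) = false by apply/eqP; lia.
  have -> : nat_of_ord i = i.-1.+1 by lia.
  by rewrite survS /=; ring.
have -> : nat_of_ord i = m by lia.
have -> : (m.-1 == m) = false by apply/eqP; lia.
rewrite eqxx -[in surv m](prednK m_gt0) -[in shift_seq m](prednK m_gt0) survS /=.
by rewrite prednK //; field.
Qed.

Lemma leslie_perturbed_subinvariant f d : 0 < d ->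
  euler_lotka f 1 + d * \sum_(j < m.+1) f j * shift_vec j < 1 ->
  forall i, (leslie_mx f *m \col_i perturbed_vec d i) i 0 <
            (\col_i perturbed_vec d i) i 0.
Proof.
move=> d_gt0 row0_lt i; rewrite mxE.
have [i0 | i_neq0] := eqVneq (i : nat) 0%N.
  by rewrite (_ : i = 0) ?leslie_perturbed_row0 ?perturbed_vec0 //; apply: val_inj.
by rewrite leslie_perturbed_row // ltrBlDr ltrDl.
Qed.

Lemma leslie_common_subinvariant f g :
  (forall j, 0 <= f j) -> (forall j, 0 <= g j) ->
  euler_lotka f 1 < 1 -> euler_lotka g 1 < 1 ->
  exists z : 'cV[R]_m.+1, [/\ nonneg_mx z,
    forall i, (leslie_mx f *m z) i 0 < z i 0 &
    forall i, (leslie_mx g *m z) i 0 < z i 0].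
Proof.
move=> f_ge0 g_ge0 f_lt1 g_lt1.
have slope_ge0 (h : nat -> R) : (forall j, 0 <= h j) ->
    0 <= \sum_(j < m.+1) h j * shift_vec j.
  move=> h_ge0; apply: sumr_ge0 => j _; rewrite mulr_ge0 // /shift_vec.
  by case: eqP; rewrite ?divr_ge0 ?shift_seq_ge0 // subr_ge0 ltW.
have [ef ef_gt0 f_small] := affine_lt_small f_lt1 (slope_ge0 f f_ge0).
have [eg eg_gt0 g_small] := affine_lt_small g_lt1 (slope_ge0 g g_ge0).
pose d := Num.min ef eg.
have d_gt0 : 0 < d by rewrite lt_min ef_gt0.
exists (\col_i perturbed_vec d i); split.
- by move=> i j; rewrite mxE perturbed_vec_ge0 ?ltW.
- by apply: leslie_perturbed_subinvariant => //; apply: f_small; rewrite ge_min lexx.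
- by apply: leslie_perturbed_subinvariant => //; apply: g_small; rewrite ge_min lexx orbT.
Qed.

End LeslieMatrix.

Lemma S_mx_leslie (R : realType) m (F A B : 'M[R]_m.+1) : (0 < m)%N ->
  S_mx F A B = leslie_mx m
    (fun k => Num.max (A (inord k) (inord k.-1)) (B (inord k) (inord k.-1)))
    (Num.max (A ord_max ord_max) (B ord_max ord_max)) (fun k => F 0 (inord k)).
Proof.
move=> m_gt0; apply/matrixP => i j; rewrite !mxE [m.+1.-1]/=; have i_le := ltn_ord i.
have [i0 | i_neq0] := eqVneq (i : nat) 0%N.
  have -> : i = 0 by apply: val_inj.
  have -> : (0 == m) = false by apply/eqP; lia.
  by rewrite inord_val.
have [ij | i_neqj] := eqVneq (i : nat) j.+1.
  have -> : (j == m :> nat) = false by apply/eqP; lia.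
  have -> : inord i.-1 = j by rewrite ij -[j.+1.-1]/(nat_of_ord j) inord_val.
  by rewrite andbF !inord_val.
case: (boolP ((i == m :> nat) && (j == m :> nat))) => [/andP [/eqP im /eqP jm] | //].
have -> : i = ord_max by apply: val_inj.
by have -> : j = ord_max by apply: val_inj.
Qed.

Lemma S_mx_ge (R : realType) n (A B C : 'M[R]_n) : ext_leslie C ->
  (forall i j, C i j <= Num.max (A i j) (B i j)) ->
  forall i j, C i j <= S_mx C A B i j.
Proof.
move=> [C_ge0 C_pat] C_le i j; rewrite mxE.
case: ifP => corner; first exact: C_le.
case: ifP => row0 //; case: ifP => subdiag; first exact: C_le.
by rewrite C_pat // /ext_leslie_pos corner row0 subdiag.
Qed.

Lemma scalar_schur_stable_lt1 (R : realType) (S : 'M[R]_1) :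
  0 <= S 0 0 -> schur_stable S -> S 0 0 < 1.
Proof.
move=> S_ge0 S_st; apply: schur_stable_eigenvalue_lt1 S_st _ S_ge0.
apply: (@eigenvalue_col _ _ _ _ (const_mx 1)).
  by apply/negP => /eqP /matrixP /(_ 0 0); rewrite !mxE => /eqP; rewrite oner_eq0.
by apply/matrixP => i j; rewrite !ord1 !mxE big_ord1 !mxE mulr1.
Qed.

Lemma S_mx_common_subinvariant (R : realType) n (A B : 'M[R]_n) :
  ext_leslie A -> ext_leslie B ->
  schur_stable (S_mx A A B) -> schur_stable (S_mx B A B) ->
  exists z : 'cV[R]_n, [/\ nonneg_mx z,
    forall i, (S_mx A A B *m z) i 0 < z i 0 &
    forall i, (S_mx B A B *m z) i 0 < z i 0].
Proof.
case: n A B => [|[|m]] A B [A_ge0 _] [B_ge0 _] SA_st SB_st.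
- by exists 0; split => -[].
- have S_lt1 (F : 'M[R]_1) : schur_stable (S_mx F A B) ->
      forall i, (S_mx F A B *m const_mx 1) i 0 < const_mx 1 i 0.
    move=> S_st i; rewrite !ord1 !mxE big_ord1 !mxE mulr1.
    have := scalar_schur_stable_lt1 _ S_st; rewrite !mxE /=.
    by apply; rewrite le_max A_ge0.
  by exists (const_mx 1); split; [move=> i j; rewrite mxE | exact: S_lt1..].
rewrite !S_mx_leslie // in SA_st SB_st *.
have s_ge0 k : 0 <= Num.max (A (inord k) (inord k.-1)) (B (inord k) (inord k.-1)).
  by rewrite le_max A_ge0.
have q_ge0 : 0 <= Num.max (A ord_max ord_max) (B ord_max ord_max).
  by rewrite le_max A_ge0.
have fA_ge0 k : 0 <= A 0 (inord k) by [].
have fB_ge0 k : 0 <= B 0 (inord k) by [].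
apply: leslie_common_subinvariant => //.
- exact: stable_leslie_corner_lt1 fA_ge0 SA_st.
- exact: stable_leslie_euler_lotka_lt1 fA_ge0 SA_st.
- exact: stable_leslie_euler_lotka_lt1 fB_ge0 SB_st.
Qed.

Lemma ler_mulmx_col (R : realType) m n (P Q : 'M[R]_(m, n)) (z : 'cV[R]_n) :
  nonneg_mx z -> (forall i j, P i j <= Q i j) ->
  forall i, (P *m z) i 0 <= (Q *m z) i 0.
Proof. by move=> z_ge0 PQ i; rewrite !mxE; apply: ler_sum => j _; rewrite ler_wpM2r. Qed.

Theorem proposition1 (R : realType) (n : nat) (A B : 'M[R]_n) :
  ext_leslie A -> ext_leslie B ->
  schur_stable (S_mx A A B) -> schur_stable (S_mx B A B) ->
  forall D : 'M[R]_n, L_AB A B D ->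
  schur_stable (block_mx (A - D) D D (B - D)).
Proof.
move=> A_el B_el SA_st SB_st D [D_ge0 [_ [AD_ge0 BD_ge0]]].
have [z [z_ge0 SAz SBz]] := S_mx_common_subinvariant A_el B_el SA_st SB_st.
have A_le : forall i j, A i j <= S_mx A A B i j.
  by apply: S_mx_ge => // i j; rewrite le_max lexx.
have B_le : forall i j, B i j <= S_mx B A B i j.
  by apply: S_mx_ge => // i j; rewrite le_max lexx orbT.
apply: (@schur_stable_subinvariant _ _ _ (col_mx z z)).
- by move=> i j; case: (split_ordP i) => i' ->; case: (split_ordP j) => j' ->;
    rewrite ?block_mxEul ?block_mxEur ?block_mxEdl ?block_mxEdr.
- by move=> i j; case: (split_ordP i) => i' ->; rewrite ?col_mxEu ?col_mxEd.
rewrite mul_block_col !mulmxBl !subrK addrC subrK => i.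
case: (split_ordP i) => i' ->; rewrite ?col_mxEu ?col_mxEd.
- exact: le_lt_trans (ler_mulmx_col z_ge0 A_le i') (SAz i').
- exact: le_lt_trans (ler_mulmx_col z_ge0 B_le i') (SBz i').
Qed.
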